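(* For every M$\Delta$C $\mathbf K$ the following are equivalent: (a) there exist two coprime proper thick ideals of $\mathbf K$; (b) there exist two distinct maximal ideals of $\mathbf K$; (c) there exist two coprime proper principal ideals of $\mathbf K$; (d) $\operatorname{Spc}\mathbf K$ is reducible, i.e. there exist proper closed subsets $Z_1,Z_2\subsetneq\operatorname{Spc}\mathbf K$ with $\operatorname{Spc}\mathbf K=Z_1\cup Z_2$.
   Context: M$\Delta$C: triangulated category with monoidal structure $(\otimes,\mathbf 1)$, $\otimes$ exact in each variable (no rigidity, generation or Noetherian assumptions). Thick ideal: full triangulated subcategory closed under direct summands and under $A\mapsto A\otimes B$, $B\otimes A$ for all $B\in\mathbf K$. $\langle\mathcal S\rangle$ = smallest thick ideal containing $\mathcal S$; principal ideal = $\langle A\rangle$ for a single object $A$; $\mathbf I,\mathbf J$ coprime if $\langle\mathbf I\cup\mathbf J\rangle=\mathbf K$; a maximal ideal is a maximal proper thick ideal. A proper thick ideal $\mathbf P$ is prime if for all thick ideals $\mathbf I,\mathbf J$, $\mathbf I\otimes\mathbf J\subseteq\mathbf P$ (i.e. $A\otimes B\in\mathbf P$ for all $A\in\mathbf I,B\in\mathbf J$) implies $\mathbf I\subseteq\mathbf P$ or $\mathbf J\subseteq\mathbf P$. $\operatorname{Spc}\mathbf K$ is the set of prime ideals with the topology whose closed sets are the intersections of the basic closed sets $V(A)=\{\mathbf P:A\notin\mathbf P\}$, $A\in\mathbf K$. *)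

From mathcomp Require Import all_boot all_algebra.
Set Implicit Arguments. Unset Strict Implicit. Unset Printing Implicit Defensive.
Import GRing.Theory.
Local Open Scope ring_scope.

Record Cat := {
  Obj : Type;
  Hom : Obj -> Obj -> zmodType;
  comp : forall A B C : Obj, Hom B C -> Hom A B -> Hom A C;
  idm : forall A : Obj, Hom A A;
  comp_assoc : forall A B C D (h : Hom C D) (g : Hom B C) (f : Hom A B),
      comp h (comp g f) = comp (comp h g) f;
  comp_id_l : forall A B (f : Hom A B), comp (idm B) f = f;
  comp_id_r : forall A B (f : Hom A B), comp f (idm A) = f;
  comp_addl : forall A B C (g1 g2 : Hom B C) (f : Hom A B),
      comp (g1 + g2) f = comp g1 f + comp g2 f;
  comp_addr : forall A B C (g : Hom B C) (f1 f2 : Hom A B),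
      comp g (f1 + f2) = comp g f1 + comp g f2
}.
Arguments comp {c A B C}.
Arguments idm {c}.

Section CatDefs.
Variable C : Cat.
Implicit Types A B S Z : Obj C.

Definition is_iso A B (f : Hom A B) :=
  exists g : Hom B A, comp g f = idm A /\ comp f g = idm B.
Definition iso_obj A B := exists f : Hom A B, is_iso f.
Definition is_zero_obj Z := idm Z = 0.
Definition is_biprod A B S (i1 : Hom A S) (i2 : Hom B S) (p1 : Hom S A) (p2 : Hom S B) :=
  [/\ comp p1 i1 = idm A, comp p2 i2 = idm B, comp p2 i1 = 0, comp p1 i2 = 0
    & comp i1 p1 + comp i2 p2 = idm S].
End CatDefs.

Record AdditiveAx (C : Cat) : Prop := {
  add_zero : exists Z : Obj C, is_zero_obj Z;
  add_biprod : forall A B : Obj C, exists (S : Obj C) (i1 : Hom A S) (i2 : Hom B S)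
      (p1 : Hom S A) (p2 : Hom S B), is_biprod i1 i2 p1 p2
}.

Record TriData (C : Cat) := {
  shift : Obj C -> Obj C;
  shiftm : forall A B : Obj C, Hom A B -> Hom (shift A) (shift B);
  dist : forall X Y Z : Obj C, Hom X Y -> Hom Y Z -> Hom Z (shift X) -> Prop
}.
Arguments shift {C} t.
Arguments shiftm {C} t {A B}.
Arguments dist {C} t {X Y Z}.

Record TriAx (C : Cat) (T : TriData C) : Prop := {
  shiftm_id : forall A : Obj C, shiftm T (idm A) = idm (shift T A);
  shiftm_comp : forall (A B D : Obj C) (g : Hom B D) (f : Hom A B),
      shiftm T (comp g f) = comp (shiftm T g) (shiftm T f);
  shiftm_add : forall (A B : Obj C) (f g : Hom A B),
      shiftm T (f + g) = shiftm T f + shiftm T g;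
  shift_ff : forall A B : Obj C, bijective (@shiftm C T A B);
  shift_es : forall A : Obj C, exists B, iso_obj (shift T B) A;
  tr1_iso : forall (X Y Z X' Y' Z' : Obj C) (f : Hom X Y) (g : Hom Y Z) (h : Hom Z (shift T X))
      (f' : Hom X' Y') (g' : Hom Y' Z') (h' : Hom Z' (shift T X'))
      (a : Hom X X') (b : Hom Y Y') (c : Hom Z Z'),
      is_iso a -> is_iso b -> is_iso c ->
      comp f' a = comp b f -> comp g' b = comp c g -> comp h' c = comp (shiftm T a) h ->
      dist T f g h -> dist T f' g' h';
  tr1_id : forall X Z : Obj C, is_zero_obj Z ->
      dist T (idm X) (0 : Hom X Z) (0 : Hom Z (shift T X));
  tr1_ext : forall (X Y : Obj C) (f : Hom X Y),
      exists (Z : Obj C) (g : Hom Y Z) (h : Hom Z (shift T X)), dist T f g h;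
  tr2 : forall (X Y Z : Obj C) (f : Hom X Y) (g : Hom Y Z) (h : Hom Z (shift T X)),
      dist T f g h <-> dist T g h (- shiftm T f);
  tr3 : forall (X Y Z X' Y' Z' : Obj C) (f : Hom X Y) (g : Hom Y Z) (h : Hom Z (shift T X))
      (f' : Hom X' Y') (g' : Hom Y' Z') (h' : Hom Z' (shift T X'))
      (a : Hom X X') (b : Hom Y Y'),
      dist T f g h -> dist T f' g' h' -> comp f' a = comp b f ->
      exists c : Hom Z Z', comp g' b = comp c g /\ comp h' c = comp (shiftm T a) h;
  tr4 : forall (X Y Z Z' X' Y' : Obj C) (f : Hom X Y) (g : Hom Y Z)
      (f' : Hom Y Z') (f'' : Hom Z' (shift T X))
      (g' : Hom Z X') (g'' : Hom X' (shift T Y))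
      (h' : Hom Z Y') (h'' : Hom Y' (shift T X)),
      dist T f f' f'' -> dist T g g' g'' -> dist T (comp g f) h' h'' ->
      exists (u : Hom Z' Y') (v : Hom Y' X'),
        [/\ dist T u v (comp (shiftm T f') g''),
            comp u f' = comp h' g, comp h'' u = f'',
            comp v h' = g' & comp g'' v = comp (shiftm T f) h'']
}.

Record MonData (C : Cat) := {
  tens : Obj C -> Obj C -> Obj C;
  tensm : forall A A' B B' : Obj C, Hom A A' -> Hom B B' -> Hom (tens A B) (tens A' B');
  unit : Obj C;
  assoc : forall A B D : Obj C, Hom (tens (tens A B) D) (tens A (tens B D));
  lunit : forall A : Obj C, Hom (tens unit A) A;
  runit : forall A : Obj C, Hom (tens A unit) A
}.
Arguments tens {C} m.
Arguments tensm {C} m {A A' B B'}.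
Arguments unit {C} m.
Arguments assoc {C} m {A B D}.
Arguments lunit {C} m {A}.
Arguments runit {C} m {A}.

Record MonAx (C : Cat) (M : MonData C) : Prop := {
  tensm_id : forall A B : Obj C, tensm M (idm A) (idm B) = idm (tens M A B);
  tensm_comp : forall (A1 A2 A3 B1 B2 B3 : Obj C) (f : Hom A1 A2) (g : Hom A2 A3)
      (f' : Hom B1 B2) (g' : Hom B2 B3),
      tensm M (comp g f) (comp g' f') = comp (tensm M g g') (tensm M f f');
  tensm_addl : forall (A A' B B' : Obj C) (f1 f2 : Hom A A') (g : Hom B B'),
      tensm M (f1 + f2) g = tensm M f1 g + tensm M f2 g;
  tensm_addr : forall (A A' B B' : Obj C) (f : Hom A A') (g1 g2 : Hom B B'),
      tensm M f (g1 + g2) = tensm M f g1 + tensm M f g2;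
  assoc_iso : forall A B D : Obj C, is_iso (@assoc C M A B D);
  assoc_nat : forall (A A' B B' D D' : Obj C) (f : Hom A A') (g : Hom B B') (h : Hom D D'),
      comp (assoc M) (tensm M (tensm M f g) h) = comp (tensm M f (tensm M g h)) (assoc M);
  lunit_iso : forall A : Obj C, is_iso (@lunit C M A);
  lunit_nat : forall (A A' : Obj C) (f : Hom A A'),
      comp (lunit M) (tensm M (idm (unit M)) f) = comp f (lunit M);
  runit_iso : forall A : Obj C, is_iso (@runit C M A);
  runit_nat : forall (A A' : Obj C) (f : Hom A A'),
      comp (runit M) (tensm M f (idm (unit M))) = comp f (runit M);
  pentagon : forall A B D E : Obj C,
      comp (@assoc C M A B (tens M D E)) (@assoc C M (tens M A B) D E)
      = comp (tensm M (idm A) (@assoc C M B D E))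
             (comp (@assoc C M A (tens M B D) E) (tensm M (@assoc C M A B D) (idm E)));
  triangle : forall A B : Obj C,
      comp (tensm M (idm A) (@lunit C M B)) (@assoc C M A (unit M) B)
      = tensm M (@runit C M A) (idm B)
}.

Record ExactAx (C : Cat) (T : TriData C) (M : MonData C) := {
  rsh : forall A B : Obj C, Hom (tens M (shift T A) B) (shift T (tens M A B));
  rsh_iso : forall A B, is_iso (rsh A B);
  rsh_nat : forall (A A' B : Obj C) (f : Hom A A'),
      comp (rsh A' B) (tensm M (shiftm T f) (idm B)) = comp (shiftm T (tensm M f (idm B))) (rsh A B);
  r_exact : forall (B X Y Z : Obj C) (f : Hom X Y) (g : Hom Y Z) (h : Hom Z (shift T X)),
      dist T f g h ->
      dist T (tensm M f (idm B)) (tensm M g (idm B)) (comp (rsh X B) (tensm M h (idm B)));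
  lsh : forall A B : Obj C, Hom (tens M A (shift T B)) (shift T (tens M A B));
  lsh_iso : forall A B, is_iso (lsh A B);
  lsh_nat : forall (A B B' : Obj C) (f : Hom B B'),
      comp (lsh A B') (tensm M (idm A) (shiftm T f)) = comp (shiftm T (tensm M (idm A) f)) (lsh A B);
  l_exact : forall (A X Y Z : Obj C) (f : Hom X Y) (g : Hom Y Z) (h : Hom Z (shift T X)),
      dist T f g h ->
      dist T (tensm M (idm A) f) (tensm M (idm A) g) (comp (lsh A X) (tensm M (idm A) h))
}.

Record MDC := {
  mcat : Cat;
  mtri : TriData mcat;
  mmon : MonData mcat;
  m_add : AdditiveAx mcat;
  m_tri : TriAx mtri;
  m_mon : MonAx mmon;
  m_exact : ExactAx mtri mmon
}.

Section Ideals.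
Variable K : MDC.
Local Notation Ob := (Obj (mcat K)).
Local Notation T := (mtri K).
Local Notation M := (mmon K).

Definition tt_thick (I : Ob -> Prop) : Prop :=
  [/\
      [/\ (forall Z : Ob, is_zero_obj Z -> I Z),
      (forall A B : Ob, iso_obj A B -> I A -> I B)
      & (forall A : Ob, I A <-> I (shift T A))],
      (forall (X Y Z : Ob) (f : Hom X Y) (g : Hom Y Z) (h : Hom Z (shift T X)),
         dist T f g h ->
         [/\ (I X -> I Y -> I Z), (I Y -> I Z -> I X) & (I X -> I Z -> I Y)]),
      (forall (A A' S : Ob) (i1 : Hom A S) (i2 : Hom A' S) (p1 : Hom S A) (p2 : Hom S A'),
         is_biprod i1 i2 p1 p2 -> I S -> I A)
    &
      (forall A B : Ob, I A -> I (tens M A B) /\ I (tens M B A))].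

Definition tt_gen (S : Ob -> Prop) : Ob -> Prop :=
  fun A => forall I, tt_thick I -> (forall X, S X -> I X) -> I A.

Definition tt_principal (A : Ob) : Ob -> Prop := tt_gen (fun X => X = A).

Definition tt_proper (I : Ob -> Prop) : Prop := exists A : Ob, ~ I A.

Definition tt_coprime (I J : Ob -> Prop) : Prop :=
  forall A : Ob, tt_gen (fun X => I X \/ J X) A.

Definition tt_maximal (I : Ob -> Prop) : Prop :=
  [/\ tt_thick I, tt_proper I &
      forall J, tt_thick J -> tt_proper J -> (forall A, I A -> J A) -> forall A, J A -> I A].

Definition tt_prime (P : Ob -> Prop) : Prop :=
  [/\ tt_thick P, tt_proper P &
      forall I J, tt_thick I -> tt_thick J ->
        (forall A B : Ob, I A -> J B -> P (tens M A B)) ->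
        (forall A, I A -> P A) \/ (forall A, J A -> P A)].

Definition Spc : Type := {P : Ob -> Prop | tt_prime P}.

Definition V (A : Ob) : Spc -> Prop := fun P => ~ proj1_sig P A.

Definition spc_closed (Z : Spc -> Prop) : Prop :=
  exists F : Ob -> Prop, forall P : Spc, Z P <-> (forall A, F A -> V A P).

End Ideals.

Arguments tt_thick {K}.
Arguments tt_gen {K}.
Arguments tt_principal {K}.
Arguments tt_proper {K}.
Arguments tt_coprime {K}.
Arguments tt_maximal {K}.
Arguments tt_prime {K}.
Arguments V {K}.
Arguments spc_closed {K}.

From Pilot Require Import Defs.
From mathcomp Require Import all_boot all_algebra.
From mathcomp Require Import boolp classical_sets.
Set Implicit Arguments. Unset Strict Implicit. Unset Printing Implicit Defensive.
Import GRing.Theory.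
Local Open Scope classical_set_scope.
Local Open Scope ring_scope.

(* Everything reduces to one statement: two ideals I, J are coprime iff no
   prime contains both.  Indeed every proper thick ideal lies in a maximal one
   (Zorn), and maximal ideals are prime.  Hence distinct maximal ideals are
   coprime, V(A) and V(B) cover Spc K exactly when <A> and <B> are coprime, and
   a proper closed subset misses some prime P, hence lies in V(A) for some
   A in P.  Finally, if I and J are coprime then the unit lies in <A, B> for
   some A in I and B in J, because <I u J> is the directed union of the ideals
   <A, B>: two such pairs are dominated by their direct sums A + A', B + B'. *)

Local Notation Hom := Defs.Hom.
Local Notation comp := Defs.comp.

Section Preadditive.
Variable C : Cat.
Implicit Types A B D : Obj C.

Lemma comp0r A B D (g : Hom B D) : comp g (0 : Hom A B) = 0.
Proof.
have := comp_addr g (0 : Hom A B) 0; rewrite addr0 => g00.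
by apply: (addrI (comp g (0 : Hom A B))); rewrite -g00 addr0.
Qed.

Lemma comp0l A B D (f : Hom A B) : comp (0 : Hom B D) f = 0.
Proof.
have := comp_addl (0 : Hom B D) 0 f; rewrite addr0 => f00.
by apply: (addrI (comp (0 : Hom B D) f)); rewrite -f00 addr0.
Qed.

Lemma compNr A B D (g : Hom B D) (f : Hom A B) : comp g (- f) = - comp g f.
Proof. by apply/eqP; rewrite -subr_eq0 opprK -comp_addr addNr comp0r. Qed.

Lemma compNl A B D (g : Hom B D) (f : Hom A B) : comp (- g) f = - comp g f.
Proof. by apply/eqP; rewrite -subr_eq0 opprK -comp_addl addNr comp0l. Qed.

Lemma compBr A B D (g : Hom B D) (f1 f2 : Hom A B) :
  comp g (f1 - f2) = comp g f1 - comp g f2.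
Proof. by rewrite comp_addr compNr. Qed.

Lemma compBl A B D (g1 g2 : Hom B D) (f : Hom A B) :
  comp (g1 - g2) f = comp g1 f - comp g2 f.
Proof. by rewrite comp_addl compNl. Qed.

Lemma iso_sym A B : iso_obj A B -> iso_obj B A.
Proof. by case=> f [g [gf fg]]; exists g, f. Qed.

Lemma iso_trans A B D : iso_obj A B -> iso_obj B D -> iso_obj A D.
Proof.
case=> f [f' [f'f ff']] [g [g' [g'g gg']]]; exists (comp g f), (comp f' g'); split.
  by rewrite comp_assoc -(comp_assoc f') g'g comp_id_r.
by rewrite comp_assoc -(comp_assoc g) ff' comp_id_r.
Qed.

Lemma biprod_swap A B S (i1 : Hom A S) (i2 : Hom B S) p1 p2 :
  is_biprod i1 i2 p1 p2 -> is_biprod i2 i1 p2 p1.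
Proof. by case=> *; split => //; rewrite addrC. Qed.

End Preadditive.

Section Triangulated.
Variables (C : Cat) (T : TriData C).
Hypotheses (TA : TriAx T) (has_zero : exists Z : Obj C, is_zero_obj Z).
Implicit Types X Y Z W : Obj C.

Lemma shiftm0 X Y : shiftm T (0 : Hom X Y) = 0.
Proof.
have := shiftm_add TA (0 : Hom X Y) 0; rewrite addr0 => s00.
by apply: (addrI (shiftm T (0 : Hom X Y))); rewrite -s00 addr0.
Qed.

Lemma shiftm_inj X Y : injective (@shiftm _ T X Y).
Proof. by have [g sK _] := shift_ff TA X Y; exact: can_inj sK. Qed.

Lemma dist_comp0 X Y Z (f : Hom X Y) (g : Hom Y Z) (h : Hom Z (shift T X)) :
  dist T f g h -> comp g f = 0.
Proof.
move=> dfgh; have [Z0 Z0_0] := has_zero.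
have [c [-> _]] := tr3 TA (a := idm X) (b := f) (tr1_id TA X Z0_0) dfgh erefl.
exact: comp0r.
Qed.

Lemma dist_lift X Y Z W (f : Hom X Y) (g : Hom Y Z) (h : Hom Z (shift T X))
    (u : Hom W Y) :
  dist T f g h -> comp g u = 0 -> exists v : Hom W X, comp f v = u.
Proof.
move=> dfgh gu; have [Z0 Z0_0] := has_zero.
have d0 := (tr2 TA _ _ _).1 (tr1_id TA W Z0_0).
have [c [_ hc]] := tr3 TA (a := u) (b := (0 : Hom Z0 Z)) d0 ((tr2 TA _ _ _).1 dfgh)
  ltac:(by rewrite gu comp0l).
have [sinv sK Ks] := shift_ff TA W X.
exists (sinv c); apply: shiftm_inj; rewrite (shiftm_comp TA) Ks; apply: oppr_inj.
by rewrite -compNl hc compNr (shiftm_id TA) comp_id_r.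
Qed.

Lemma dist_mono X Y Z W (f : Hom X Y) (g : Hom Y Z) (t : Hom W X) :
  dist T f g 0 -> comp f t = 0 -> t = 0.
Proof.
move=> dfg ft; have dsh := (tr2 TA _ _ _).1 ((tr2 TA _ _ _).1 dfg).
have [v vt] := dist_lift (u := shiftm T t) dsh
  ltac:(by rewrite compNl -(shiftm_comp TA) ft shiftm0 oppr0).
by apply: shiftm_inj; rewrite shiftm0 -vt comp0l.
Qed.

Lemma dist_split X Y Z (f : Hom X Y) (g : Hom Y Z) :
  dist T f g 0 -> exists (p : Hom Y X) (s : Hom Z Y), is_biprod f s p g.
Proof.
move=> dfg; have gf := dist_comp0 dfg.
(* Since h = 0, idm Z lifts to a section s of g, and idm - s g factors through f. *)
have [s gs] := dist_lift (u := idm Z) ((tr2 TA _ _ _).1 dfg) (comp0l _ _).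
have [p fp] := dist_lift (u := idm Y - comp s g) dfg
  ltac:(by rewrite compBr comp_id_r comp_assoc gs comp_id_l subrr).
exists p, s; split => //.
- apply/eqP; rewrite -subr_eq0; apply/eqP; apply: (dist_mono dfg).
  rewrite compBr comp_assoc fp compBl comp_id_l -comp_assoc gf comp0r subr0.
  by rewrite comp_id_r subrr.
- apply: (dist_mono dfg).
  by rewrite comp_assoc fp compBl comp_id_l -comp_assoc gs comp_id_r subrr.
- by rewrite fp subrK.
Qed.

End Triangulated.

Section ThickIdeals.
Variable K : MDC.
Local Notation Ob := (Obj (mcat K)).
Local Notation T := (mtri K).
Local Notation M := (mmon K).
Local Notation "A ** B" := (tens M A B) (at level 40, left associativity).
Implicit Types (A B S X Y Z : Ob) (I J P : set Ob).

Lemma thick_zero I Z : tt_thick I -> is_zero_obj Z -> I Z.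
Proof. by case=> [[+ _ _] _ _ _]; apply. Qed.

Lemma thick_iso I A B : tt_thick I -> iso_obj A B -> I A -> I B.
Proof. by case=> [[_ + _] _ _ _]; apply. Qed.

Lemma thick_shift I A : tt_thick I -> I A <-> I (shift T A).
Proof. by case=> [[_ _ +] _ _ _]; apply. Qed.

Lemma thick_dist I X Y Z (f : Hom X Y) (g : Hom Y Z) (h : Hom Z (shift T X)) :
  tt_thick I -> dist T f g h ->
  [/\ (I X -> I Y -> I Z), (I Y -> I Z -> I X) & (I X -> I Z -> I Y)].
Proof. by case=> _ + _ _; apply. Qed.

Lemma thick_summand I A A' S (i1 : Hom A S) (i2 : Hom A' S) p1 p2 :
  tt_thick I -> is_biprod i1 i2 p1 p2 -> I S -> I A.
Proof. by case=> _ _ + _; apply. Qed.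

Lemma thick_tens_l I A B : tt_thick I -> I A -> I (A ** B).
Proof. by case=> _ _ _ Itens /(Itens _ B) []. Qed.

Lemma thick_tens_r I A B : tt_thick I -> I A -> I (B ** A).
Proof. by case=> _ _ _ Itens /(Itens _ B) []. Qed.

Lemma lunit_iso_obj A : iso_obj (unit M ** A) A.
Proof. exists (lunit M); exact: (lunit_iso (m_mon K)). Qed.

Lemma assoc_iso_obj A B Z : iso_obj ((A ** B) ** Z) (A ** (B ** Z)).
Proof. exists (assoc M); exact: (assoc_iso (m_mon K)). Qed.

Lemma thick_unit I : tt_thick I -> I (unit M) -> forall A, I A.
Proof.
by move=> thI Iu A; exact: thick_iso thI (lunit_iso_obj A) (thick_tens_l A thI Iu).
Qed.

Lemma proper_unit I : tt_thick I -> tt_proper I -> ~ I (unit M).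
Proof. by move=> thI [X nIX] /(thick_unit thI) /(_ X). Qed.

Lemma tensm0l A A' B B' (g : Hom B B') : tensm M (0 : Hom A A') g = 0.
Proof.
have := tensm_addl (m_mon K) (0 : Hom A A') 0 g; rewrite addr0 => t00.
by apply: (addrI (tensm M (0 : Hom A A') g)); rewrite -t00 addr0.
Qed.

Lemma tens_zero Z B : is_zero_obj Z -> is_zero_obj (Z ** B).
Proof. by rewrite /is_zero_obj -(tensm_id (m_mon K)) => ->; rewrite tensm0l. Qed.

Lemma tens_iso_l A A' B : iso_obj A A' -> iso_obj (A ** B) (A' ** B).
Proof.
case=> f [g [gf fg]]; exists (tensm M f (idm B)), (tensm M g (idm B)).
by rewrite -!(tensm_comp (m_mon K)) gf fg comp_id_l !(tensm_id (m_mon K)).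
Qed.

Lemma tens_biprod A A' S B (i1 : Hom A S) (i2 : Hom A' S) p1 p2 :
  is_biprod i1 i2 p1 p2 ->
  is_biprod (tensm M i1 (idm B)) (tensm M i2 (idm B))
            (tensm M p1 (idm B)) (tensm M p2 (idm B)).
Proof.
case=> p1i1 p2i2 p2i1 p1i2 ip.
by split; rewrite -?(tensm_comp (m_mon K)) ?comp_id_l -?(tensm_addl (m_mon K))
  ?p1i1 ?p2i2 ?p2i1 ?p1i2 ?ip ?tensm0l ?(tensm_id (m_mon K)).
Qed.

Definition thick_subcat I : Prop :=
  [/\ [/\ (forall Z, is_zero_obj Z -> I Z),
          (forall A B, iso_obj A B -> I A -> I B)
        & (forall A, I A <-> I (shift T A))],
      (forall X Y Z (f : Hom X Y) (g : Hom Y Z) (h : Hom Z (shift T X)),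
         dist T f g h ->
         [/\ (I X -> I Y -> I Z), (I Y -> I Z -> I X) & (I X -> I Z -> I Y)])
    & (forall A A' S (i1 : Hom A S) (i2 : Hom A' S) (p1 : Hom S A) (p2 : Hom S A'),
         is_biprod i1 i2 p1 p2 -> I S -> I A)].

Lemma thick_subcatW I : tt_thick I -> thick_subcat I.
Proof. by case. Qed.

Lemma thick_of_subcat I : thick_subcat I ->
  (forall A B, I A -> I (A ** B) /\ I (B ** A)) -> tt_thick I.
Proof. by case. Qed.

Lemma thick_subcat_preim_tens B I :
  thick_subcat I -> thick_subcat (fun X => I (X ** B)).
Proof.
case=> [[I0 Iiso Ish] Idist Isum]; split; [split| |].
- by move=> Z /(tens_zero B) /I0.
- by move=> A A' /(tens_iso_l B) /Iiso.
- move=> A; rewrite Ish.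
  have sh_iso : iso_obj (shift T A ** B) (shift T (A ** B)).
    by exists (rsh (m_exact K) A B); exact: rsh_iso.
  by split; apply: Iiso; [exact: iso_sym|].
- by move=> X Y Z f g h /(r_exact (m_exact K) B) /Idist.
- by move=> A A' S i1 i2 p1 p2 /(tens_biprod B) /Isum.
Qed.

Lemma thick_subcat_bigcap (i_ : Type) (D : set i_) (F : i_ -> set Ob) :
  (forall i, D i -> thick_subcat (F i)) -> thick_subcat (\bigcap_(i in D) F i).
Proof.
move=> thF; split; [split| |].
- by move=> Z Z0 i /thF [[+ _ _] _ _]; apply.
- by move=> A B iAB FA i Di; case: (thF i Di) => [[_ + _] _ _]; apply; last exact: FA.
- move=> A; split=> FA i Di; case: (thF i Di) => [[_ _ /(_ A) Fsh] _ _].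
    exact: Fsh.1 (FA i Di).
  exact: Fsh.2 (FA i Di).
- move=> X Y Z f g h dfgh; split=> F1 F2 i Di;
  case: (thF i Di) => _ /(_ _ _ _ _ _ _ dfgh) [t1 t2 t3] _;
  [exact: t1 (F1 i Di) (F2 i Di)|exact: t2 (F1 i Di) (F2 i Di)|exact: t3 (F1 i Di) (F2 i Di)].
- move=> A A' S i1 i2 p1 p2 bp FS i Di; case: (thF i Di) => _ _ Fsum.
  exact: Fsum bp (FS i Di).
Qed.

Lemma thick_bigcap (i_ : Type) (D : set i_) (F : i_ -> set Ob) :
  (forall i, D i -> tt_thick (F i)) -> tt_thick (\bigcap_(i in D) F i).
Proof.
move=> thF; apply: thick_of_subcat.
  by apply: thick_subcat_bigcap => i /thF /thick_subcatW.
move=> A B FA; split=> i Di.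
  exact: thick_tens_l _ (thF i Di) (FA i Di).
exact: thick_tens_r _ (thF i Di) (FA i Di).
Qed.

Lemma gen_thick (S : set Ob) : tt_thick (tt_gen S).
Proof.
have -> : tt_gen S = \bigcap_(I in [set I | tt_thick I /\ S `<=` I]) I.
  by rewrite predeqE => X; split=> [GX I [] | GX I thI SI]; [exact: GX|exact: GX].
by apply: thick_bigcap => I [].
Qed.

Lemma sub_gen (S : set Ob) : S `<=` tt_gen S.
Proof. by move=> X SX I _; apply. Qed.

Lemma gen_min (S : set Ob) I : tt_thick I -> S `<=` I -> tt_gen S `<=` I.
Proof. by move=> thI SI X; apply. Qed.

Lemma coprime_unit I J : tt_gen (I `|` J) (unit M) -> tt_coprime I J.
Proof. exact: thick_unit (gen_thick _). Qed.

Lemma principal_subP I A : tt_thick I -> tt_principal A `<=` I <-> I A.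
Proof.
move=> thI; split=> [AI | IA]; first by apply: AI; exact: sub_gen.
by apply: gen_min thI _ => X ->.
Qed.

Lemma principal_proper I A : tt_thick I -> tt_proper I -> I A ->
  tt_proper (tt_principal A).
Proof.
by move=> thI [X nIX] IA; exists X => /((principal_subP A thI).2 IA).
Qed.

Lemma maximal_prime P : tt_maximal P -> tt_prime P.
Proof.
case=> thP pP maxP; split => // I1 J1 thI thJ IJP.
have [IP | nIP] := pselect (I1 `<=` P); [by left | right] => B JB.
(* [set X | P (X ** B)] is only a left ideal; the extra factor C makes it
   two-sided. *)
pose N := \bigcap_(C in setT) (fun X => P ((X ** C) ** B)).
have thN : tt_thick N.
  apply: thick_of_subcat => [|X Y NX].
    apply: thick_subcat_bigcap => C _.
    exact: (thick_subcat_preim_tens C (thick_subcat_preim_tens B (thick_subcatW thP))).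
  split=> C _.
    exact: thick_iso thP (tens_iso_l B (iso_sym (assoc_iso_obj X Y C))) (NX _ I).
  apply: (thick_iso thP (iso_trans (iso_sym (assoc_iso_obj _ _ _))
    (tens_iso_l B (iso_sym (assoc_iso_obj Y X C))))).
  exact: thick_tens_r Y thP (NX C I).
have PN : P `<=` N by move=> X PX C _; exact: thick_tens_l _ thP (thick_tens_l _ thP PX).
have IN : I1 `<=` N by move=> X IX C _; exact: IJP _ _ (thick_tens_l C thI IX) JB.
have genT : tt_gen (P `|` I1) (unit M).
  apply: contrapT => nGu; apply: nIP => A IA.
  have pG : tt_proper (tt_gen (P `|` I1)) by exists (unit M).
  apply: (maxP _ (gen_thick _) pG); last by apply: sub_gen; right.
  by move=> X PX; apply: sub_gen; left.
have /(_ (unit M) I) := gen_min thN (fun X => or_ind (@PN X) (@IN X)) genT.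
exact: thick_iso thP (iso_trans (tens_iso_l B (lunit_iso_obj _)) (lunit_iso_obj B)).
Qed.

Lemma thick_bigcup (i_ : Type) (D : set i_) (F : i_ -> set Ob) :
  D !=set0 -> (forall i, D i -> tt_thick (F i)) ->
  (forall i j, D i -> D j -> exists2 k, D k & F i `|` F j `<=` F k) ->
  tt_thick (\bigcup_(i in D) F i).
Proof.
move=> [i0 Di0] thF dirF.
have common X Y : (\bigcup_(i in D) F i) X -> (\bigcup_(i in D) F i) Y ->
    exists2 k, D k & F k X /\ F k Y.
  move=> [i Di FiX] [j Dj FjY]; have [k Dk ijk] := dirF i j Di Dj.
  by exists k => //; split; apply: ijk; [left|right].
split; [split| | |].
- by move=> Z Z0; exists i0 => //; exact: thick_zero (thF _ Di0) Z0.
- by move=> A B iAB [i Di FA]; exists i => //; exact: thick_iso (thF _ Di) iAB FA.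
- move=> A; split=> -[i Di FA]; exists i => //.
    exact: (thick_shift A (thF _ Di)).1 FA.
  exact: (thick_shift A (thF _ Di)).2 FA.
- move=> X Y Z f g h dfgh; split=> U1 U2; have [k Dk [F1 F2]] := common _ _ U1 U2;
  exists k => //; have [t1 t2 t3] := thick_dist (thF _ Dk) dfgh;
  [exact: t1 F1 F2|exact: t2 F1 F2|exact: t3 F1 F2].
- move=> A A' S i1 i2 p1 p2 bp [i Di FS]; exists i => //.
  exact: thick_summand (thF _ Di) bp FS.
- move=> A B [i Di FA]; split; exists i => //.
    exact: thick_tens_l _ (thF _ Di) FA.
  exact: thick_tens_r _ (thF _ Di) FA.
Qed.

Lemma exists_maximal I : tt_thick I -> tt_proper I -> exists2 P, tt_maximal P & I `<=` P.
Proof.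
move=> thI pI.
pose above J := [/\ tt_thick J, I `<=` J & ~ J (unit M)].
pose t0 : {J | above J} := exist _ I (And3 thI (@subset_refl _ I) (proper_unit thI pI)).
have [] := @ZL_preorder _ t0 (fun s t => `[< sval s `<=` sval t >]).
- by move=> s; apply/asboolP.
- by move=> r s t /asboolP rs /asboolP st; apply/asboolP; exact: subset_trans st.
- (* The chain A may be empty, hence the upper bound is taken over A and t0. *)
  move=> A totA; pose D := A `|` [set t0]; pose U := \bigcup_(s in D) sval s.
  have t0_min (s : {J | above J}) : sval t0 `<=` sval s by case: s => ? [].
  have Ddir s1 s2 : D s1 -> D s2 -> exists2 k, D k & sval s1 `|` sval s2 `<=` sval k.
    move=> [As1|->] [As2|->].
    + have [/asboolP s12|/asboolP s21] := totA s1 s2 As1 As2.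
        by exists s2; [left|rewrite subUset; split].
      by exists s1; [left|rewrite subUset; split].
    + by exists s1; [left|rewrite subUset; split].
    + by exists s2; [left|rewrite subUset; split].
    + by exists t0; [right|rewrite subUset; split].
  have aboveU : above U.
    split; first by apply: thick_bigcup => [|[J []] //|]; [exists t0; right|].
      by move=> X IX; exists t0 => //; right.
    by move=> [s _]; case: s => J [].
  exists (exist _ U aboveU) => s As; apply/asboolP => X sX.
  by exists s => //; left.
- move=> [P [thP IP nPu]] Pmax.
  exists P => //; split => //; first by exists (unit M).
  move=> J thJ pJ PJ.
  have aboveJ : above J by split=> //; [exact: subset_trans PJ | exact: proper_unit].
  by apply/asboolP; apply: (Pmax (exist _ J aboveJ)); apply/asboolP.
Qed.

Lemma spc_thick (P : Spc K) : tt_thick (sval P).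
Proof. by case: (svalP P). Qed.

Lemma coprimeP I J :
  tt_coprime I J <-> forall P : Spc K, ~ (I `<=` sval P /\ J `<=` sval P).
Proof.
split=> [cop [P [thP pP _]] /= [IP JP] | noP X].
  by apply: (proper_unit thP pP); apply: (cop (unit M) _ thP) => X [/IP|/JP].
apply: contrapT => nX.
have [P mP genP] := exists_maximal (gen_thick (I `|` J)) (ex_intro _ X nX).
by apply: (noP (exist _ P (maximal_prime mP))); split=> Y Y_;
  apply: genP; apply: sub_gen; [left|right].
Qed.

Lemma exists_sum_generator A B :
  exists W, forall I, tt_thick I -> I W <-> I A /\ I B.
Proof.
have [W [g [h dBW]]] := tr1_ext (m_tri K) (0 : Hom B (shift T A)).
have dsplit : dist T g h 0.
  by have := (tr2 (m_tri K) _ _ _).1 dBW; rewrite (shiftm0 (m_tri K)) oppr0.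
have [p [s bp]] := dist_split (m_tri K) (add_zero (m_add K)) dsplit.
exists W => I thI; rewrite (thick_shift A thI) (thick_shift B thI).
split=> [IW | [IA IB]].
  by split; [exact: thick_summand thI bp IW | exact: thick_summand thI (biprod_swap bp) IW].
by have [_ _ ext] := thick_dist thI dsplit; exact: ext.
Qed.

Lemma coprime_principal_sub I J : tt_thick I -> tt_thick J -> tt_coprime I J ->
  exists A B, [/\ I A, J B & tt_coprime (tt_principal A) (tt_principal B)].
Proof.
move=> thI thJ cop; have [Z0 Z0_0] := add_zero (m_add K).
pose D := [set p : Ob * Ob | I p.1 /\ J p.2].
pose F (p : Ob * Ob) := tt_gen [set p.1; p.2].
have thU : tt_thick (\bigcup_(p in D) F p).
  apply: thick_bigcup => [|p _|[A B] [A' B'] [/= IA JB] [/= IA' JB']].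
  - by exists (Z0, Z0); split; [exact: thick_zero thI Z0_0|exact: thick_zero thJ Z0_0].
  - exact: gen_thick.
  - have [WA WAP] := exists_sum_generator A A'.
    have [WB WBP] := exists_sum_generator B B'.
    have FW := @sub_gen [set WA; WB].
    have [FA FA'] := (WAP _ (gen_thick _)).1 (FW WA (or_introl erefl)).
    have [FB FB'] := (WBP _ (gen_thick _)).1 (FW WB (or_intror erefl)).
    exists (WA, WB); first by split; [apply/(WAP _ thI)|apply/(WBP _ thJ)].
    by move=> X [] /=; apply: gen_min (gen_thick _) _ X => Y [->|->].
have [[A B] [/= IA JB] uAB] : (\bigcup_(p in D) F p) (unit M).
  apply: (cop (unit M) _ thU) => X [IX|JX].
    exists (X, Z0); first by split=> //; exact: thick_zero thJ Z0_0.
    by apply: sub_gen; left.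
  exists (Z0, X); first by split=> //; exact: thick_zero thI Z0_0.
  by apply: sub_gen; right.
exists A, B; split=> //; apply: coprime_unit.
apply: gen_min (gen_thick _) _ _ uAB => Y [->|->].
  by apply: sub_gen; left; exact: sub_gen.
by apply: sub_gen; right; exact: sub_gen.
Qed.

Lemma coprime_maximal_neq I J :
  tt_thick I -> tt_thick J -> tt_proper I -> tt_proper J -> tt_coprime I J ->
  exists P Q, [/\ tt_maximal P, tt_maximal Q & exists A, ~ (P A <-> Q A)].
Proof.
move=> thI thJ pI pJ /coprimeP cop.
have [P mP IP] := exists_maximal thI pI; have [Q mQ JQ] := exists_maximal thJ pJ.
exists P, Q; split=> //; apply: contrapT => eqPQ.
apply: (cop (exist _ P (maximal_prime mP))); split; first exact: IP.
move=> X /JQ QX /=.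
by apply: contrapT => nPX; apply: eqPQ; exists X => -[_ /(_ QX)].
Qed.

Lemma maximal_neq_coprime P Q : tt_maximal P -> tt_maximal Q ->
  (exists A, ~ (P A <-> Q A)) -> tt_coprime P Q.
Proof.
case=> _ _ maxP [_ _ maxQ] [A nPQA]; apply/coprimeP => -[R [thR pR _]] /= [PR QR].
apply: nPQA; split=> [/PR|/QR]; [exact: maxQ | exact: maxP].
Qed.

Lemma V_closed A : spc_closed (V A).
Proof. by exists [set A] => P; split=> [VAP X -> // | ]; apply. Qed.

Lemma spc_closed_subV (Z : set (Spc K)) (P : Spc K) : spc_closed Z -> ~ Z P ->
  exists2 A, sval P A & Z `<=` V A.
Proof.
case=> F ZF nZP; apply: contrapT => noA; apply/nZP/ZF => A FA PA.
by apply: noA; exists A => // R /ZF; apply.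
Qed.

Lemma principal_properP A : tt_proper (tt_principal A) <-> exists P : Spc K, sval P A.
Proof.
split=> [pA | [[P [thP pP _]] /= PA]]; last exact: principal_proper thP pP PA.
have [P mP AP] := exists_maximal (gen_thick _) pA.
by exists (exist _ P (maximal_prime mP)); apply: AP; exact: sub_gen.
Qed.

End ThickIdeals.

Theorem theoremB (K : MDC) :
  let Ob := Obj (mcat K) in
  let a := exists I J : Ob -> Prop,
      [/\ tt_thick I, tt_thick J, tt_proper I, tt_proper J & tt_coprime I J] in
  let b := exists I J : Ob -> Prop,
      [/\ tt_maximal I, tt_maximal J & exists A : Ob, ~ (I A <-> J A)] in
  let c := exists A B : Ob,
      [/\ tt_proper (tt_principal A), tt_proper (tt_principal B) & tt_coprime (tt_principal A) (tt_principal B)] in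
  let d := exists Z1 Z2 : Spc K -> Prop,
      [/\ spc_closed Z1, spc_closed Z2, (exists P, ~ Z1 P), (exists P, ~ Z2 P)
        & forall P, Z1 P \/ Z2 P] in
  [/\ a <-> b, b <-> c & c <-> d].
Proof.
move=> Ob a b c d.
have ab : a <-> b.
  split=> [[I [J [thI thJ pI pJ cop]]] | [P [Q [mP mQ neq]]]].
    exact: coprime_maximal_neq cop.
  case: (mP) (mQ) => thP pP _ [thQ pQ _].
  by exists P, Q; split=> //; exact: maximal_neq_coprime.
have ac : a <-> c.
  split=> [[I [J [thI thJ pI pJ cop]]] | [A [B [pA pB cop]]]].
    have [A [B [IA JB copAB]]] := coprime_principal_sub thI thJ cop.
    exists A, B; split=> //; [exact: principal_proper thI pI IA|].
    exact: principal_proper thJ pJ JB.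
  by exists (tt_principal A), (tt_principal B); split=> //; exact: gen_thick.
have cd : c <-> d.
  split=> [[A [B [pA pB /coprimeP cop]]] | [Z1 [Z2 [cl1 cl2 [P1 nP1] [P2 nP2] cover]]]].
    exists (V A), (V B); split; try exact: V_closed.
    - by have [P PA] := (principal_properP A).1 pA; exists P => /(_ PA).
    - by have [P PB] := (principal_properP B).1 pB; exists P => /(_ PB).
    - move=> P; apply/not_andP; have := cop P.
      by rewrite !(principal_subP _ (spc_thick P)).
  have [A P1A Z1A] := spc_closed_subV cl1 nP1.
  have [B P2B Z2B] := spc_closed_subV cl2 nP2.
  exists A, B; split; [apply/principal_properP; by exists P1|
    apply/principal_properP; by exists P2|].
  apply/coprimeP => P; rewrite !(principal_subP _ (spc_thick P)) => -[PA PB].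
  by case: (cover P) => [/Z1A|/Z2B]; apply.
by split=> //; exact: iff_trans (iff_sym ab) ac.
Qed.
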